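(* Let $I\subseteq\mathbb{R}$ be an interval. If $(p_\lambda)_{\lambda\in I}$ and $(q_\lambda)_{\lambda\in I}$ are increasing nets of projections in an abelian $AW^*$-algebra, then $$\bigwedge_{\lambda\in I}(p_\lambda\vee q_\lambda)=\Big(\bigwedge_{\lambda\in I}p_\lambda\Big)\vee\Big(\bigwedge_{\mu\in I}q_\mu\Big).$$
   Context: An $AW^*$-algebra is a C*-algebra $\mathcal{M}$ such that for every nonempty $S\subseteq\mathcal{M}$ there is a projection $p$ with $\{x\in\mathcal{M}: sx=0\ \forall s\in S\}=p\mathcal{M}$; its projections form a complete lattice under the Löwner order, with lattice operations $\vee,\wedge$. A net $(p_\lambda)_{\lambda\in I}$ is increasing if $p_\lambda\le p_\mu$ whenever $\lambda\le\mu$. *)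

From HB Require Import structures.
From mathcomp Require Import all_boot all_order all_algebra.
From mathcomp Require Import complex.
From mathcomp Require Import all_classical all_reals topology normedtype.
Set Implicit Arguments. Unset Strict Implicit. Unset Printing Implicit Defensive.
Import Order.TTheory GRing.Theory Num.Theory.
Import numFieldNormedType.Exports.
Local Open Scope ring_scope.
Local Open Scope complex_scope.
Local Open Scope classical_set_scope.

(* No unit is assumed. *)
Definition is_Cstar_algebra (R : realType) (A : completeNormedModType R[i])
    (mul : A -> A -> A) (star : A -> A) : Prop :=
  (forall x y z, mul x (mul y z) = mul (mul x y) z)
   /\ (forall x y z, mul (x + y) z = mul x z + mul y z)
   /\ (forall x y z, mul x (y + z) = mul x y + mul x z)
   /\ (forall (a : R[i]) x y, mul (a *: x) y = a *: mul x y)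
   /\ (forall (a : R[i]) x y, mul x (a *: y) = a *: mul x y)
   /\ (forall x y, star (x + y) = star x + star y)
   /\ (forall (a : R[i]) x, star (a *: x) = (a^*)%C *: star x)
   /\ (forall x, star (star x) = x)
   /\ (forall x y, star (mul x y) = mul (star y) (star x))
   /\ (forall x y, `|mul x y| <= `|x| * `|y|)
   /\ (forall x, `|mul (star x) x| = `|x| ^+ 2).

Definition is_abelian (A : Type) (mul : A -> A -> A) : Prop :=
  forall x y, mul x y = mul y x.

Definition is_projection (A : Type) (mul : A -> A -> A) (star : A -> A) (p : A)
  : Prop := mul p p = p /\ star p = p.

Definition is_positive (A : Type) (mul : A -> A -> A) (star : A -> A) (x : A)
  : Prop := exists z, x = mul (star z) z.

Definition lowner_le (R : realType) (A : completeNormedModType R[i])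
    (mul : A -> A -> A) (star : A -> A) (x y : A) : Prop :=
  is_positive mul star (y - x).

Definition is_AWstar_algebra (R : realType) (A : completeNormedModType R[i])
    (mul : A -> A -> A) (star : A -> A) : Prop :=
  is_Cstar_algebra mul star /\
  forall S : set A, S !=set0 ->
    exists p, is_projection mul star p /\
      [set x | forall s, S s -> mul s x = 0] = [set mul p y | y in [set: A]].

Definition is_proj_meet (R : realType) (A : completeNormedModType R[i])
    (mul : A -> A -> A) (star : A -> A) (T : Type) (D : set T) (f : T -> A)
    (m : A) : Prop :=
  [/\ is_projection mul star m,
      (forall i, D i -> lowner_le mul star m (f i)) &
      (forall r, is_projection mul star r ->
         (forall i, D i -> lowner_le mul star r (f i)) -> lowner_le mul star r m)].

Definition is_proj_join (R : realType) (A : completeNormedModType R[i])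
    (mul : A -> A -> A) (star : A -> A) (p q j : A) : Prop :=
  [/\ is_projection mul star j,
      lowner_le mul star p j, lowner_le mul star q j &
      (forall r, is_projection mul star r ->
         lowner_le mul star p r -> lowner_le mul star q r -> lowner_le mul star j r)].

Definition increasing_proj_net (R : realType) (A : completeNormedModType R[i])
    (mul : A -> A -> A) (star : A -> A) (I : interval R) (p : R -> A) : Prop :=
  (forall l, l \in I -> is_projection mul star (p l)) /\
  (forall l m, l \in I -> m \in I -> l <= m -> lowner_le mul star (p l) (p m)).

(* The key fact is that for projections the Löwner order is multiplicative:
   [p <= q] iff [p q = p]. Its hard direction says that a projection [x] with
   [-x = w^* w] vanishes, which follows from the norm bound
   [b |y| <= |a y + b y|] for skew-adjoint [a] and real [b >= 0], a consequence
   of the C*-identity. Joins of projections are then [p + q - q p], and if [r]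
   lies below every [p_l \/ q_l], the projections [r (1 - /\ q) (1 - p_l)] lie
   below every [q_k] (by monotonicity, comparing [l] and [k]), hence below
   [/\ q]; being orthogonal to [/\ q] they vanish, so [r (1 - /\ q) <= /\ p]
   and [r <= /\ p \/ /\ q]. *)

From HB Require Import structures.
From mathcomp Require Import all_boot all_order all_algebra.
From mathcomp Require Import complex.
From mathcomp Require Import all_classical all_reals topology normedtype.
From mathcomp Require Import lra.
From Stdlib Require Import Ring_theory Ring.
Set Implicit Arguments. Unset Strict Implicit. Unset Printing Implicit Defensive.
Import Order.TTheory GRing.Theory Num.Theory.
Local Open Scope ring_scope.
Local Open Scope complex_scope.
Local Open Scope classical_set_scope.

(* [sqrt (C + s ^+ 2) - s] tends to [0], so the slack [Y - s * N] is eventually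
   smaller than any [e > 0]. *)
Lemma le_of_quadratic_slack (R : realType) (C N d b : R) : 0 <= C -> 0 <= N ->
  (forall s, 0 <= s -> exists2 Y, (s + b) * N <= d + Y & Y ^+ 2 <= (C + s ^+ 2) * N ^+ 2) ->
  b * N <= d.
Proof.
move=> C0 N0 slack; rewrite leNgt; apply/negP; rewrite -subr_gt0.
set e := b * N - d => e0.
(* For this [s], [(s * N + e) ^+ 2 = (C + s ^+ 2) * N ^+ 2 + e ^+ 2]. *)
pose s := C * N / (2 * e).
have s0 : 0 <= s by rewrite divr_ge0 ?mulr_ge0 // ltW.
have se : s * (2 * e) * N = C * N * N by rewrite mulfVK // gt_eqF // mulr_gt0.
have [Y le_Y le_Y2] := slack s s0.
have ge_Y : s * N + e <= Y by rewrite /e; lra.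
have ge_Y2 : (s * N + e) ^+ 2 <= Y ^+ 2.
  by rewrite ler_pXn2r // nnegrE; [have := mulr_ge0 s0 N0; lra | apply: le_trans ge_Y; nra].
have : e ^+ 2 <= 0 by nra.
by rewrite leNgt exprn_gt0.
Qed.

Section RealNorm.
Variables (R : realType) (A : normedModType R[i]).

Definition rnorm (x : A) : R := complex.Re `|x|.

Lemma normr_rnorm (x : A) : `|x| = (rnorm x)%:C.
Proof. by rewrite /rnorm RRe_real // normr_real. Qed.

Lemma rnorm_ge0 x : 0 <= rnorm x.
Proof. by rewrite -lecR -normr_rnorm normr_ge0. Qed.

Lemma rnormD x y : rnorm (x + y) <= rnorm x + rnorm y.
Proof. by have := ler_normD x y; rewrite !normr_rnorm -rmorphD lecR. Qed.

Lemma rnorm0 : rnorm 0 = 0.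
Proof. by rewrite /rnorm normr0. Qed.

Lemma rnormN x : rnorm (- x) = rnorm x.
Proof. by rewrite /rnorm normrN. Qed.

Lemma rnorm_eq0 x : rnorm x = 0 -> x = 0.
Proof. by move=> x0; apply/eqP; rewrite -normr_eq0 normr_rnorm x0. Qed.

Lemma rnormZ (c : R) x : 0 <= c -> rnorm (c%:C *: x) = c * rnorm x.
Proof. by move=> c0; rewrite /rnorm normrZ ger0_norm ?lecR // normr_rnorm -rmorphM. Qed.

End RealNorm.

Section CommutativeCstarAlgebra.
Variables (R : realType) (A : completeNormedModType R[i]).
Variables (mul : A -> A -> A) (star : A -> A).
Hypothesis cstarA : is_Cstar_algebra mul star.
Hypothesis mulC : is_abelian mul.
Local Notation "x ⋆ y" := (mul x y) (at level 40, left associativity).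

Lemma mulA x y z : x ⋆ (y ⋆ z) = x ⋆ y ⋆ z.
Proof. by case: cstarA. Qed.
Lemma mulDl x y z : (x + y) ⋆ z = x ⋆ z + y ⋆ z.
Proof. by case: cstarA => _ []. Qed.
Lemma mulDr x y z : x ⋆ (y + z) = x ⋆ y + x ⋆ z.
Proof. by case: cstarA => _ [] _ []. Qed.
Lemma mulZl (a : R[i]) x y : (a *: x) ⋆ y = a *: (x ⋆ y).
Proof. by case: cstarA => _ [] _ [] _ []. Qed.
Lemma mulZr (a : R[i]) x y : x ⋆ (a *: y) = a *: (x ⋆ y).
Proof. by case: cstarA => _ [] _ [] _ [] _ []. Qed.
Lemma starD x y : star (x + y) = star x + star y.
Proof. by case: cstarA => _ [] _ [] _ [] _ [] _ []. Qed.
Lemma starZ (a : R[i]) x : star (a *: x) = (a^*)%C *: star x.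
Proof. by case: cstarA => _ [] _ [] _ [] _ [] _ [] _ []. Qed.
Lemma starK x : star (star x) = x.
Proof. by case: cstarA => _ [] _ [] _ [] _ [] _ [] _ [] _ []. Qed.
Lemma starM x y : star (x ⋆ y) = star y ⋆ star x.
Proof. by case: cstarA => _ [] _ [] _ [] _ [] _ [] _ [] _ [] _ []. Qed.

Lemma rnormM x y : rnorm (x ⋆ y) <= rnorm x * rnorm y.
Proof.
case: cstarA => _ [] _ [] _ [] _ [] _ [] _ [] _ [] _ [] _ [] + _.
by move=> /(_ x y); rewrite !normr_rnorm -rmorphM lecR.
Qed.

Lemma rnorm_cstar x : rnorm (star x ⋆ x) = rnorm x ^+ 2.
Proof.
case: cstarA => _ [] _ [] _ [] _ [] _ [] _ [] _ [] _ [] _ [] _ /(_ x).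
by rewrite !normr_rnorm -rmorphXn => -[].
Qed.

Lemma mul0r y : 0 ⋆ y = 0.
Proof. by apply: (addrI (0 ⋆ y)); rewrite -mulDl !addr0. Qed.
Lemma mulNl x y : (- x) ⋆ y = - (x ⋆ y).
Proof. by apply/eqP; rewrite -addr_eq0 -mulDl addNr mul0r. Qed.
Lemma mulBl x y z : (x - y) ⋆ z = x ⋆ z - y ⋆ z.
Proof. by rewrite mulDl mulNl. Qed.
Lemma star0 : star 0 = 0.
Proof. by apply: (addrI (star 0)); rewrite -starD !addr0. Qed.
Lemma starN x : star (- x) = - star x.
Proof. by apply/eqP; rewrite -addr_eq0 -starD addNr star0. Qed.
Lemma starB x y : star (x - y) = star x - star y.
Proof. by rewrite starD starN. Qed.

Lemma rnorm_star x : rnorm (star x) = rnorm x.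
Proof.
suff le_star y : rnorm y <= rnorm (star y).
  by apply/eqP; rewrite eq_le le_star -{2}(starK x) le_star.
have := rnormM (star y) y; rewrite rnorm_cstar expr2.
have [->|y0] := eqVneq (rnorm y) 0; first by rewrite rnorm_ge0.
by rewrite ler_pM2r // lt0r y0 rnorm_ge0.
Qed.

(* Identities in the commutative, possibly non-unital algebra [A] are proved
   by [ring] in its unitization [A * R[i]]. *)
Definition unitization := (A * R[i])%type.
Definition uadd (u v : unitization) : unitization := (u.1 + v.1, u.2 + v.2).
Definition uopp (u : unitization) : unitization := (- u.1, - u.2).
Definition usub (u v : unitization) : unitization := uadd u (uopp v).
Definition umul (u v : unitization) : unitization :=
  (u.1 ⋆ v.1 + u.2 *: v.1 + v.2 *: u.1, u.2 * v.2).

Lemma unitization_ring :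
  ring_theory ((0, 0) : unitization) (0, 1) uadd umul usub uopp eq.
Proof.
split.
- by case=> a x; rewrite /uadd /= !add0r.
- by case=> a x [b y]; rewrite /uadd /= addrC (addrC x).
- by case=> a x [b y] [c z]; rewrite /uadd /= !addrA.
- by case=> a x; rewrite /umul /= mul0r add0r scale1r scaler0 addr0 mul1r.
- by case=> a x [b y]; rewrite /umul /= mulC (mulrC x) addrAC.
- case=> a x [b y] [c z]; rewrite /umul /=.
  rewrite !(mulDl, mulDr, mulZl, mulZr, scalerDr, scalerA) !mulA.
  rewrite (mulrC z x) (mulrC z y) mulrA; congr pair.
  by rewrite !addrA [LHS](ACl (1*4*2*5*3*6*7))%AC.
- case=> a x [b y] [c z]; rewrite /umul /uadd /=.
  rewrite !(mulDl, scalerDl, scalerDr) mulrDl; congr pair.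
  by rewrite !addrA [LHS](ACl (1*3*5*2*4*6))%AC.
- by [].
- by case=> a x; rewrite /uadd /uopp /= !subrr.
Qed.
Add Ring unitization_ring : unitization_ring.

Definition inU (a : A) : unitization := (a, 0).
Definition scalU (c : R[i]) : unitization := (0, c).

Lemma inU_inj : injective inU.
Proof. by move=> a b []. Qed.
Lemma inUD a b : inU (a + b) = uadd (inU a) (inU b).
Proof. by rewrite /inU /uadd /= addr0. Qed.
Lemma inUN a : inU (- a) = uopp (inU a).
Proof. by rewrite /inU /uopp /= oppr0. Qed.
Lemma inUM a b : inU (a ⋆ b) = umul (inU a) (inU b).
Proof. by rewrite /inU /umul /= !scale0r !addr0 mulr0. Qed.
Lemma inUZ c a : inU (c *: a) = umul (scalU c) (inU a).
Proof. by rewrite /inU /umul /scalU /= mul0r add0r scaler0 addr0 mulr0. Qed.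
Lemma scalUM c d : scalU (c * d) = umul (scalU c) (scalU d).
Proof. by rewrite /scalU /umul /= mul0r !scaler0 !addr0. Qed.
Lemma scalUD c d : scalU (c + d) = uadd (scalU c) (scalU d).
Proof. by rewrite /scalU /uadd /= addr0. Qed.
Lemma scalU2 : scalU 2%:C = uadd (0, 1) (0, 1).
Proof. by rewrite /scalU /uadd /= addr0 (rmorphD _ 1 1) rmorph1. Qed.

Ltac unitize := apply: inU_inj;
  rewrite ?(inUD, inUN, inUM, inUZ, scalUM, scalUD, scalU2); ring.

Lemma skew_shift_rnorm_ge a y (b : R) : star a = - a -> 0 <= b ->
  b * rnorm y <= rnorm (a ⋆ y + b%:C *: y).
Proof.
move=> skew_a b0; apply: (le_of_quadratic_slack (rnorm_ge0 (a ⋆ a)) (rnorm_ge0 y)).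
move=> s s0; exists (rnorm (a ⋆ y - s%:C *: y)).
  have -> : (s + b) * rnorm y = rnorm ((a ⋆ y + b%:C *: y) - (a ⋆ y - s%:C *: y)).
    rewrite -rnormZ ?addr_ge0 //.
    have -> : (s + b)%:C = s%:C + b%:C :> R[i] by rewrite rmorphD.
    by congr rnorm; unitize.
  by apply: le_trans (rnormD _ _) _; rewrite rnormN.
rewrite -rnorm_cstar.
have -> : star (a ⋆ y - s%:C *: y) ⋆ (a ⋆ y - s%:C *: y) =
    - (star y ⋆ (a ⋆ a ⋆ y)) + (s ^+ 2)%:C *: (star y ⋆ y).
  have -> : (s ^+ 2)%:C = s%:C * s%:C :> R[i] by rewrite rmorphXn.
  rewrite starB starM starZ skew_a.
  have -> : (s%:C)^*%C = s%:C :> R[i] by exact: conjc_real.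
  unitize.
rewrite mulrDl; apply: le_trans (rnormD _ _) _.
rewrite rnormN rnormZ ?sqr_ge0 // rnorm_cstar lerD2r.
apply: le_trans (rnormM _ _) _; rewrite rnorm_star expr2 mulrCA ler_wpM2l ?rnorm_ge0 //.
exact: rnormM.
Qed.

Lemma skew_sqr_shift_rnorm_ge c y (b : R) : star c = - c -> 0 <= b ->
  b ^+ 2 * rnorm y <= rnorm (c ⋆ c ⋆ y - (b ^+ 2)%:C *: y).
Proof.
move=> skew_c b0; set z := c ⋆ y + b%:C *: y.
have le_z : b * rnorm y <= rnorm z by exact: skew_shift_rnorm_ge.
have skew_Nc : star (- c) = - - c by rewrite starN skew_c.
have := skew_shift_rnorm_ge z skew_Nc b0.
have -> : (- c) ⋆ z + b%:C *: z = - (c ⋆ c ⋆ y - (b ^+ 2)%:C *: y).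
  have -> : (b ^+ 2)%:C = b%:C * b%:C :> R[i] by rewrite rmorphXn.
  by rewrite /z; unitize.
rewrite rnormN; apply: le_trans.
by rewrite expr2 -mulrA ler_wpM2l.
Qed.

Local Notation proj := (is_projection mul star).

Lemma proj_absorbs_neg_cstar x w : proj x -> star w ⋆ w = - x -> w ⋆ x = w.
Proof.
move=> [xx sx] ww; apply/eqP; rewrite eq_sym -subr_eq0; apply/eqP/rnorm_eq0.
apply/eqP; rewrite -sqrf_eq0 -rnorm_cstar; apply/eqP.
have -> : star (w - w ⋆ x) ⋆ (w - w ⋆ x) =
    star w ⋆ w - star w ⋆ w ⋆ x - star w ⋆ w ⋆ x + star w ⋆ w ⋆ (x ⋆ x).
  by rewrite starB starM sx; unitize.
by rewrite ww xx mulNl xx !opprK addNr add0r subrr rnorm0.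
Qed.

Lemma proj_neg_cstar_eq0 x w : proj x -> star w ⋆ w = - x -> x = 0.
Proof.
move=> /[dup] proj_x [xx sx] ww; have wx := proj_absorbs_neg_cstar proj_x ww.
(* With [a := w - w^*] skew and [h := w + w^*], both [h ^+ 2 = a ^+ 2 - 4 x] and
   [a ^+ 2 = (i h) ^+ 2 + 4 x] are shifted squares of skew elements, which gives
   [16 |x| <= 4 |a ^+ 2| <= |h ^+ 2 a ^+ 2| <= 4 |x|]. *)
set a := w - star w; set h := w + star w.
have skew_a : star a = - a by rewrite starB starK opprB.
have skew_ih : star ('i%C *: h) = - ('i%C *: h).
  have conj_i : ('i%C)^*%C = - 'i%C :> R[i] by apply/eqP; rewrite eq_complex /= oppr0 !eqxx.
  by rewrite starZ starD starK addrC conj_i scaleNr.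
have ihih : 'i%C *: h ⋆ ('i%C *: h) = - (h ⋆ h).
  by rewrite mulZl mulZr scalerA -expr2 sqr_i scaleN1r.
have hh : h ⋆ h = a ⋆ a - (2 ^+ 2)%:C *: x.
  have -> : h ⋆ h = a ⋆ a + (2 ^+ 2)%:C *: (star w ⋆ w).
    have -> : (2 ^+ 2)%:C = 2%:C * 2%:C :> R[i] by rewrite rmorphXn.
    by unitize.
  by rewrite ww scalerN.
have swx : star w ⋆ x = star w by rewrite -{1}sx -starM mulC wx.
have ax : a ⋆ x = a by rewrite mulBl wx swx.
have aax : a ⋆ a ⋆ x = a ⋆ a by rewrite -mulA ax.
have ge_aa : 2 ^+ 2 * rnorm x <= rnorm (a ⋆ a).
  have := skew_sqr_shift_rnorm_ge x skew_ih (ler0n _ 2).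
  by rewrite ihih hh mulNl mulBl aax mulZl xx opprB addrAC subrr add0r rnormN.
have ge_hhaa : 2 ^+ 2 * rnorm (a ⋆ a) <= rnorm (h ⋆ h ⋆ (a ⋆ a)).
  have xaa : x ⋆ (a ⋆ a) = a ⋆ a by rewrite mulC aax.
  by rewrite hh (mulBl (a ⋆ a)) mulZl xaa; apply: skew_sqr_shift_rnorm_ge.
have le_hhaa : rnorm (h ⋆ h ⋆ (a ⋆ a)) <= 2 ^+ 2 * rnorm x.
  have -> : h ⋆ h ⋆ (a ⋆ a) = (w ⋆ w - star w ⋆ star w) ⋆ (w ⋆ w - star w ⋆ star w).
    by rewrite /h /a; unitize.
  have rnorm_w2 : rnorm w ^+ 2 = rnorm x by rewrite -rnorm_cstar ww rnormN.
  have rnorm_x2 : rnorm x ^+ 2 = rnorm x by rewrite -rnorm_cstar sx xx.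
  have le_ww : rnorm (w ⋆ w - star w ⋆ star w) <= 2 * rnorm x.
    apply: le_trans (rnormD _ _) _; rewrite rnormN.
    by have := rnormM w w; have := rnormM (star w) (star w); rewrite rnorm_star -expr2; lra.
  apply: le_trans (rnormM _ _) _.
  by have := rnorm_ge0 (w ⋆ w - star w ⋆ star w); nra.
apply: rnorm_eq0; have := rnorm_ge0 x; nra.
Qed.

Lemma proj_subMr a p : proj a -> proj p -> proj (a - a ⋆ p).
Proof.
move=> [aa sa] [pp sp]; split; last by rewrite starB starM sa sp mulC.
have -> : (a - a ⋆ p) ⋆ (a - a ⋆ p) = a ⋆ a - a ⋆ a ⋆ p - a ⋆ a ⋆ p + a ⋆ a ⋆ (p ⋆ p).
  by unitize.
by rewrite aa pp subrK.
Qed.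

Lemma proj_add_orth a c : proj a -> proj c -> a ⋆ c = 0 -> proj (a + c).
Proof.
move=> [aa sa] [cc sc] ac0; split; last by rewrite starD sa sc.
have -> : (a + c) ⋆ (a + c) = a ⋆ a + c ⋆ c + a ⋆ c + a ⋆ c by unitize.
by rewrite aa cc ac0 !addr0.
Qed.

Local Notation lle := (lowner_le mul star).

Lemma lowner_projP p q : proj p -> proj q -> lle p q <-> p ⋆ q = p.
Proof.
move=> proj_p proj_q; have [[pp sp] [qq sq]] := (proj_p, proj_q); split.
- move=> [z zz]; set x := p - p ⋆ q.
  have proj_x : proj x by exact: proj_subMr.
  have [xx sx] := proj_x.
  have xqp : x ⋆ (q - p) = - x.
    have -> : x ⋆ (q - p) = p ⋆ q - p ⋆ p - p ⋆ (q ⋆ q) + p ⋆ p ⋆ q by unitize.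
    by rewrite pp qq /x; unitize.
  have zx : star (z ⋆ x) ⋆ (z ⋆ x) = - x.
    have -> : star (z ⋆ x) ⋆ (z ⋆ x) = x ⋆ x ⋆ (star z ⋆ z) by rewrite starM sx; unitize.
    by rewrite xx -zz.
  by apply/eqP; rewrite eq_sym -subr_eq0 -/x (proj_neg_cstar_eq0 proj_x zx).
- move=> pq; exists (q - p); rewrite starB sp sq.
  have -> : (q - p) ⋆ (q - p) = q ⋆ q - p ⋆ q - p ⋆ q + p ⋆ p by unitize.
  by rewrite pp qq pq subrK.
Qed.

Lemma lowner_proj_trans p q r : proj p -> proj q -> proj r ->
  lle p q -> lle q r -> lle p r.
Proof.
move=> proj_p proj_q proj_r /(lowner_projP proj_p proj_q) pq /(lowner_projP proj_q proj_r) qr.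
by apply/(lowner_projP proj_p proj_r); rewrite -pq -mulA qr.
Qed.

Lemma proj_join_eq p q j : proj p -> proj q -> is_proj_join mul star p q j ->
  j = p + (q - q ⋆ p).
Proof.
move=> proj_p proj_q [proj_j le_pj le_qj join_lub].
have [[pp _] [qq _]] := (proj_p, proj_q).
set u := p + (q - q ⋆ p).
have proj_u : proj u.
  apply: proj_add_orth => //; first exact: proj_subMr.
  have -> : p ⋆ (q - q ⋆ p) = p ⋆ q - p ⋆ p ⋆ q by unitize.
  by rewrite pp subrr.
have ju : j ⋆ u = j.
  apply/(lowner_projP proj_j proj_u)/join_lub => //; apply/lowner_projP => //.
    have -> : p ⋆ u = p ⋆ p + p ⋆ q - p ⋆ p ⋆ q by rewrite /u; unitize.
    by rewrite pp addrK.
  have -> : q ⋆ u = q ⋆ q + q ⋆ p - q ⋆ q ⋆ p by rewrite /u; unitize.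
  by rewrite qq addrK.
have pj : p ⋆ j = p by apply/lowner_projP.
have qj : q ⋆ j = q by apply/lowner_projP.
have uj : u ⋆ j = u by rewrite /u mulDl mulBl -mulA pj qj.
by rewrite -uj mulC ju.
Qed.

Section Distributivity.
Variables (d : Order.disp_t) (T : orderType d) (D : set T) (p q pq : T -> A) (mp mq : A).
Hypothesis proj_p : forall l, D l -> proj (p l).
Hypothesis proj_q : forall l, D l -> proj (q l).
Hypothesis p_incr : forall l m, D l -> D m -> (l <= m)%O -> lle (p l) (p m).
Hypothesis q_incr : forall l m, D l -> D m -> (l <= m)%O -> lle (q l) (q m).
Hypothesis join_pq : forall l, D l -> is_proj_join mul star (p l) (q l) (pq l).
Hypothesis meet_p : is_proj_meet mul star D p mp.
Hypothesis meet_q : is_proj_meet mul star D q mq.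

Lemma join_meets_le_join j : is_proj_join mul star mp mq j ->
  forall l, D l -> lle j (pq l).
Proof.
case: meet_p meet_q => proj_mp le_mp _ [proj_mq le_mq _] [_ _ _ join_lub] l Dl.
have [proj_pql le_p le_q _] := join_pq Dl.
apply: join_lub => //.
  exact: lowner_proj_trans (proj_p Dl) proj_pql (le_mp l Dl) le_p.
exact: lowner_proj_trans (proj_q Dl) proj_pql (le_mq l Dl) le_q.
Qed.

Lemma compl_p_le_q e : proj e ->
  (forall l, D l -> (e - e ⋆ p l) ⋆ q l = e - e ⋆ p l) ->
  forall l k, D l -> D k -> (e - e ⋆ p l) ⋆ q k = e - e ⋆ p l.
Proof.
move=> [ee _] fq l k Dl Dk; case: (leP l k) => [le_lk | /ltW le_kl].
  have qlk : q l ⋆ q k = q l.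
    by apply/(lowner_projP (proj_q Dl) (proj_q Dk)); apply: q_incr.
  by rewrite -[in LHS](fq l Dl) -mulA qlk fq.
have pkl : p k ⋆ p l = p k.
  by apply/(lowner_projP (proj_p Dk) (proj_p Dl)); apply: p_incr.
have fkl : (e - e ⋆ p l) ⋆ (e - e ⋆ p k) = e - e ⋆ p l.
  have -> : (e - e ⋆ p l) ⋆ (e - e ⋆ p k) =
      e ⋆ e - e ⋆ e ⋆ p l - e ⋆ e ⋆ p k + e ⋆ e ⋆ (p k ⋆ p l) by unitize.
  by rewrite ee pkl subrK.
by rewrite -fkl -mulA fq.
Qed.

Lemma compl_meet_le_p r : proj r -> (forall l, D l -> r ⋆ pq l = r) ->
  forall l, D l -> (r - r ⋆ mq) ⋆ p l = r - r ⋆ mq.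
Proof.
move=> proj_r r_pq l Dl; case: meet_q => /[dup] proj_mq [mqmq _] _ mq_glb.
set e := r - r ⋆ mq; have proj_e : proj e by exact: proj_subMr.
have fq k : D k -> (e - e ⋆ p k) ⋆ q k = e - e ⋆ p k.
  move=> Dk; apply/eqP; rewrite eq_sym -subr_eq0; apply/eqP.
  have -> : e - e ⋆ p k - (e - e ⋆ p k) ⋆ q k =
      r - r ⋆ (p k + (q k - q k ⋆ p k)) - (r - r ⋆ (p k + (q k - q k ⋆ p k))) ⋆ mq.
    by rewrite /e; unitize.
  by rewrite -(proj_join_eq (proj_p Dk) (proj_q Dk) (join_pq Dk)) r_pq // subrr mul0r subrr.
have proj_f : proj (e - e ⋆ p l) by exact: proj_subMr (proj_p Dl).
have f_mq : (e - e ⋆ p l) ⋆ mq = e - e ⋆ p l.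
  apply/(lowner_projP proj_f proj_mq)/mq_glb => // k Dk.
  by apply/(lowner_projP proj_f (proj_q Dk)); apply: compl_p_le_q.
have : e - e ⋆ p l = 0.
  have -> : e - e ⋆ p l = e ⋆ mq - e ⋆ mq ⋆ p l by rewrite -[LHS]f_mq; unitize.
  by rewrite /e mulBl -mulA mqmq subrr mul0r subrr.
by move/subr0_eq.
Qed.

Lemma le_join_meets j r : is_proj_join mul star mp mq j -> proj r ->
  (forall l, D l -> lle r (pq l)) -> lle r j.
Proof.
move=> [proj_j le_mpj le_mqj _] proj_r le_r.
case: meet_p meet_q => proj_mp _ mp_glb [proj_mq _ _].
have r_pq l : D l -> r ⋆ pq l = r.
  move=> Dl; have [proj_pql _ _ _] := join_pq Dl.
  by apply/(lowner_projP proj_r proj_pql)/le_r.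
set e := r - r ⋆ mq; have proj_e : proj e by exact: proj_subMr.
have e_mp : e ⋆ mp = e.
  apply/(lowner_projP proj_e proj_mp)/mp_glb => // l Dl.
  by apply/(lowner_projP proj_e (proj_p Dl)); apply: compl_meet_le_p.
have mpj : mp ⋆ j = mp by apply/lowner_projP.
have mqj : mq ⋆ j = mq by apply/lowner_projP.
apply/(lowner_projP proj_r proj_j).
have -> : r ⋆ j = r ⋆ (mq ⋆ j) + e ⋆ mp ⋆ j by rewrite e_mp /e; unitize.
by rewrite -mulA mpj e_mp mqj /e addrC subrK.
Qed.

Lemma meet_joins_eq_join_meets j : is_proj_join mul star mp mq j ->
  is_proj_meet mul star D pq j.
Proof.
move=> join_j; split; first by case: join_j.
  exact: join_meets_le_join.
by move=> r; apply: le_join_meets.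
Qed.

End Distributivity.
End CommutativeCstarAlgebra.

Theorem lemma2p1 (R : realType) (A : completeNormedModType R[i])
    (mul : A -> A -> A) (star : A -> A)
    (HAW : is_AWstar_algebra mul star) (Hab : is_abelian mul)
    (I : interval R) (p q : R -> A)
    (Hp : increasing_proj_net mul star I p)
    (Hq : increasing_proj_net mul star I q)
    (pq : R -> A)
    (Hpq : forall l, l \in I -> is_proj_join mul star (p l) (q l) (pq l))
    (mp mq : A)
    (Hmp : is_proj_meet mul star [set l | l \in I] p mp)
    (Hmq : is_proj_meet mul star [set l | l \in I] q mq)
    (j : A) (Hj : is_proj_join mul star mp mq j) :
  is_proj_meet mul star [set l | l \in I] pq j.
Proof.
case: HAW Hp Hq => cstarA _ [proj_p p_incr] [proj_q q_incr].
exact: (@meet_joins_eq_join_meets _ _ _ _ cstarA Hab _ R [set l | l \in I]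
  _ _ _ _ _ proj_p proj_q p_incr q_incr Hpq Hmp Hmq _ Hj).
Qed.
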